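(* For every LDBA $A$ with $n$ states, of which $n_d$ lie in the deterministic part $Q_d$, there is a deterministic parity automaton $B$ with $\mathsf L(B)=\mathsf L(A)$ having at most $2^{n}\cdot\sum_{i=0}^{n_d}\frac{n_d!}{(n_d-i)!}\le 2^n\cdot e\cdot n_d\cdot n_d!$ states (hence $2^{\mathcal O(n\log n)}$ states) and using at most $2n_d+1$ colors (hence $\mathcal O(n)$ colors).
   Context: A (transition-based) nondeterministic Büchi automaton is $A=(Q,q_0,\Sigma,\delta,\alpha)$ with finite $Q$, $q_0\in Q$, finite alphabet $\Sigma$, total $\delta\subseteq Q\times\Sigma\times Q$, accepting transitions $\alpha\subseteq\delta$; a run is accepting if it uses transitions of $\alpha$ infinitely often. An LDBA additionally has $Q_d\subseteq Q$ with (1) $\alpha\subseteq Q_d\times\Sigma\times Q_d$; (2) each $q\in Q_d$ has exactly one $\sigma$-successor for each $\sigma$; (3) successors of states in $Q_d$ lie in $Q_d$; and $q_0\notin Q_d$. A deterministic parity automaton (DPA) has a deterministic total transition function and a coloring of transitions by positive integers; a word is accepted iff the minimal color seen infinitely often on its run is even. $e$ denotes Euler's number. *)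

From Stdlib Require Import Reals.
From mathcomp Require Import all_boot.
Set Implicit Arguments. Unset Strict Implicit. Unset Printing Implicit Defensive.

Definition word (Sigma : Type) := nat -> Sigma.

Record NBA (Sigma Q : finType) := {
  nba_init  : Q;
  nba_delta : {set Q * Sigma * Q};
  nba_alpha : {set Q * Sigma * Q};
}.

Definition nba_total (Sigma Q : finType) (A : NBA Sigma Q) : Prop :=
  forall (q : Q) (a : Sigma), exists q' : Q, (q, a, q') \in nba_delta A.

Definition nba_alpha_sub (Sigma Q : finType) (A : NBA Sigma Q) : Prop :=
  nba_alpha A \subset nba_delta A.

Definition nba_wf (Sigma Q : finType) (A : NBA Sigma Q) : Prop :=
  nba_total A /\ nba_alpha_sub A.

Definition nba_run (Sigma Q : finType) (A : NBA Sigma Q) (w : word Sigma)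
  (r : nat -> Q) : Prop :=
  r 0 = nba_init A /\ forall i, (r i, w i, r i.+1) \in nba_delta A.

Definition nba_run_accepting (Sigma Q : finType) (A : NBA Sigma Q) (w : word Sigma)
  (r : nat -> Q) : Prop :=
  forall N, exists i, N <= i /\ (r i, w i, r i.+1) \in nba_alpha A.

Definition nba_accepts (Sigma Q : finType) (A : NBA Sigma Q) (w : word Sigma) : Prop :=
  exists r, nba_run A w r /\ nba_run_accepting A w r.

Definition is_LDBA (Sigma Q : finType) (A : NBA Sigma Q) (Qd : {set Q}) : Prop :=
  nba_wf A /\
  (forall q a q', (q, a, q') \in nba_alpha A -> q \in Qd /\ q' \in Qd) /\
  (forall q a, q \in Qd -> exists q', (q, a, q') \in nba_delta A /\
                  forall q'', (q, a, q'') \in nba_delta A -> q'' = q') /\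
  (forall q a q', q \in Qd -> (q, a, q') \in nba_delta A -> q' \in Qd) /\
  nba_init A \notin Qd.

Record DPA (Sigma S : finType) := {
  dpa_init  : S;
  dpa_trans : S -> Sigma -> S;
  dpa_color : S -> Sigma -> nat;
}.

Definition dpa_colors_positive (Sigma S : finType) (B : DPA Sigma S) : Prop :=
  forall s a, 0 < dpa_color B s a.

Fixpoint dpa_run (Sigma S : finType) (B : DPA Sigma S) (w : word Sigma) (i : nat) : S :=
  match i with
  | 0 => dpa_init B
  | i'.+1 => dpa_trans B (dpa_run B w i') (w i')
  end.

Definition dpa_color_at (Sigma S : finType) (B : DPA Sigma S) (w : word Sigma) (i : nat) : nat :=
  dpa_color B (dpa_run B w i) (w i).

Definition inf_often_color (Sigma S : finType) (B : DPA Sigma S) (w : word Sigma) (c : nat) : Prop :=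
  forall N, exists i, N <= i /\ dpa_color_at B w i = c.

Definition dpa_accepts (Sigma S : finType) (B : DPA Sigma S) (w : word Sigma) : Prop :=
  exists c, inf_often_color B w c /\
            (forall c', inf_often_color B w c' -> c <= c') /\
            ~~ odd c.

Definition dpa_num_colors (Sigma S : finType) (B : DPA Sigma S) : nat :=
  size (undup [seq dpa_color B p.1 p.2 | p : S * Sigma]).

Definition ldba_sum (nd : nat) : nat :=
  \sum_(i < nd.+1) (nd`! %/ (nd - i)`!).

Definition e_bound (n nd : nat) : Prop :=
  Rle (INR (2 ^ n * ldba_sum nd))
      (Rmult (Rmult (Rmult (INR (2 ^ n)) (exp 1)) (INR nd)) (INR (nd`!))).

From HB Require Import structures.
From Stdlib Require Import Reals Classical Lra.
From mathcomp Require Import all_boot zify.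
Set Implicit Arguments. Unset Strict Implicit. Unset Printing Implicit Defensive.

(* The DPA runs a subset construction on the initial part of the LDBA and keeps
   the reachable states of the deterministic part [Qd] in a list ordered by the
   age of the oldest run through them.  Since runs inside [Qd] are
   deterministic, two runs that meet merge for good; the younger slot is then
   vacated.  Reading a letter emits colour [2i+1] when the run in slot [i]
   merges into an older one and [2i+2] when it takes an accepting transition,
   and the transition's colour is the least of these.  So the least colour
   seen infinitely often is even, [2m+2], iff the runs in slots [0..m]
   eventually never merge and the run in slot [m] accepts infinitely often.
   An accepting run of the LDBA enters [Qd] and can only move down the list,
   so it settles in some slot; conversely the run in a settled slot, prefixed
   by a run reaching its state, is a run of the LDBA. *)

(* [minn] has no unit on [nat], but [bigD1] only needs a commutative semigroup. *)
HB.instance Definition _ := SemiGroup.isComLaw.Build nat minn minnA minnC.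

Section UndupFirst.
Variable T : eqType.

(* [undup] keeps the last occurrence of each item; this keeps the first. *)
Definition undup_first (s : seq T) : seq T := rev (undup (rev s)).

Lemma mem_undup_first s : undup_first s =i s.
Proof. by move=> x; rewrite mem_rev mem_undup mem_rev. Qed.

Lemma undup_first_uniq s : uniq (undup_first s).
Proof. by rewrite rev_uniq undup_uniq. Qed.

Lemma undup_first_id s : uniq s -> undup_first s = s.
Proof. by move=> s_uniq; rewrite /undup_first undup_id ?rev_uniq // revK. Qed.

Lemma size_undup_first s : size (undup_first s) <= size s.
Proof. by rewrite size_rev -[leqRHS]size_rev size_undup. Qed.

Lemma ltn_size_undup_first s : (size (undup_first s) < size s) = ~~ uniq s.
Proof. by rewrite size_rev -[ltnRHS]size_rev ltn_size_undup rev_uniq. Qed.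

Lemma undup_first_cat s t :
  undup_first (s ++ t) = undup_first s ++ rev [seq x <- undup (rev t) | x \notin s].
Proof.
rewrite /undup_first rev_cat undup_cat rev_cat; congr (_ ++ rev _).
by apply: eq_filter => x; rewrite mem_rev.
Qed.

Lemma uniq_take_nth (x0 : T) s k : k <= size s ->
  uniq (take k s) <-> (forall i, i < k -> nth x0 s i \notin take i s).
Proof.
elim: k => [|k IHk] le_k_s; first by rewrite take0; split => // _ i.
have le_k_s' : k <= size s by apply: ltnW.
rewrite (take_nth x0) // rcons_uniq; split.
  move=> /andP [nth_k take_k_uniq] i; rewrite ltnS leq_eqVlt => /orP [/eqP -> //|].
  exact: (proj1 (IHk le_k_s') take_k_uniq).
move=> nth_notin; apply/andP; split; first exact: nth_notin.
by apply/(IHk le_k_s') => i lt_ik; apply: nth_notin; apply: ltnW.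
Qed.

End UndupFirst.

Section InfinitelyOften.
Variable f : nat -> nat.

Definition inf_often (c : nat) : Prop := forall N, exists i, N <= i /\ f i = c.

Lemma not_inf_often c : ~ inf_often c -> exists N, forall i, N <= i -> f i <> c.
Proof.
move=> not_io; apply: NNPP => no_N; apply: not_io => N; apply: NNPP => no_i.
by apply: no_N; exists N => i le_Ni fi_c; apply: no_i; exists i.
Qed.

Lemma eventually_geq c : (forall c', c' < c -> ~ inf_often c') ->
  exists T, forall t, T <= t -> c <= f t.
Proof.
elim: c => [|c IHc] below_c; first by exists 0.
have [T1 geq_c] := IHc (fun c' lt_c'c => below_c c' (ltnW lt_c'c)).
have [T2 neq_c] := not_inf_often (below_c c (ltnSn c)).
exists (maxn T1 T2) => t; rewrite geq_max => /andP [le_T1t le_T2t].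
by rewrite ltn_neqAle geq_c // andbT; apply/eqP => /esym; apply: neq_c.
Qed.

Lemma inf_often_bounded b : (forall N, exists i, N <= i /\ f i <= b) ->
  exists c, c <= b /\ inf_often c.
Proof.
elim: b => [|b IHb] often_le.
  exists 0; split => // N; have [i [le_Ni]] := often_le N.
  by rewrite leqn0 => /eqP; exists i.
case: (classic (inf_often b.+1)) => [io_b|not_io_b]; first by exists b.+1.
have [N0 neq_b] := not_inf_often not_io_b.
have [c [le_cb io_c]] : exists c, c <= b /\ inf_often c.
  apply: IHb => N; have [i [le_Ni le_fib]] := often_le (maxn N N0).
  move: le_Ni; rewrite geq_max => /andP [le_Ni le_N0i].
  exists i; split => //; rewrite -ltnS ltn_neqAle le_fib andbT.
  by apply/eqP; apply: neq_b.
by exists c; split => //; apply: leqW.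
Qed.

Lemma ex_least (P : nat -> Prop) n : P n ->
  exists m, P m /\ forall k, P k -> m <= k.
Proof.
elim/ltn_ind: n => n IHn Pn.
case: (classic (exists k, k < n /\ P k)) => [[k [lt_kn Pk]]|none]; first exact: IHn Pk.
exists n; split => // k Pk; rewrite leqNgt; apply/negP => lt_kn; apply: none.
by exists k.
Qed.

Lemma least_inf_often_even b :
  (forall N, exists i, N <= i /\ f i <= b) ->
  (exists T, forall t, T <= t -> odd (f t) -> b < f t) ->
  exists c, inf_often c /\ (forall c', inf_often c' -> c <= c') /\ ~~ odd c.
Proof.
move=> often_le [T odd_gt].
have [c0 [le_c0b io_c0]] := inf_often_bounded often_le.
have [c [io_c least_c]] := ex_least io_c0.
exists c; do 2!split => //; apply/negP => odd_c.
have [t [le_Tt ft_c]] := io_c T.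
have := odd_gt t le_Tt; rewrite ft_c => /(_ odd_c).
by rewrite ltnNge (leq_trans (least_c _ io_c0) le_c0b).
Qed.

Lemma nonincreasing_stabilizes k : (forall t, k <= t -> f t.+1 <= f t) ->
  exists T, k <= T /\ forall t, T <= t -> f t = f T.
Proof.
move Efk : (f k) => n; elim/ltn_ind: n k Efk => n IHn k Efk noninc.
have le_fk : forall t, k <= t -> f t <= f k.
  elim=> [|t IHt]; first by rewrite leqn0 => /eqP ->.
  rewrite leq_eqVlt => /orP [/eqP <- //|lt_kt].
  exact: leq_trans (noninc _ lt_kt) (IHt lt_kt).
case: (classic (exists t, k <= t /\ f t <> f k)) => [[t [le_kt neq_t]]|const].
  have lt_ftn : f t < n by rewrite -Efk ltn_neqAle le_fk // andbT; apply/eqP.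
  have noninc_t t' : t <= t' -> f t'.+1 <= f t' by move/(leq_trans le_kt)/noninc.
  have [T [le_tT HT]] := IHn _ lt_ftn t erefl noninc_t.
  by exists T; split => //; apply: leq_trans le_tT.
exists k; split => // t le_kt; apply: NNPP => neq_t; apply: const; by exists t.
Qed.

End InfinitelyOften.

Section LDBAtoDPA.
Variables (Sigma Q : finType) (A : NBA Sigma Q) (Qd : {set Q}).
Hypothesis A_LDBA : is_LDBA A Qd.

Local Notation q0 := (nba_init A).
Local Notation delta := (nba_delta A).

Definition dsucc (q : Q) (a : Sigma) : Q := odflt q [pick q' | (q, a, q') \in delta].

Lemma dsucc_delta q a : (q, a, dsucc q a) \in delta.
Proof.
rewrite /dsucc; case: pickP => [q' //|no_succ].
have [[total _] _] := A_LDBA; have [q' q_a_q'] := total q a.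
by rewrite no_succ in q_a_q'.
Qed.

Lemma dsucc_unique q a q' : q \in Qd -> (q, a, q') \in delta -> q' = dsucc q a.
Proof.
move=> q_Qd q_a_q'; have [_ [_ [det _]]] := A_LDBA.
have [p [_ unique_p]] := det q a q_Qd.
by rewrite (unique_p _ q_a_q') (unique_p _ (dsucc_delta q a)).
Qed.

Lemma delta_Qd q a q' : q \in Qd -> (q, a, q') \in delta -> q' \in Qd.
Proof. by have [_ [_ [_ [Qd_closed _]]]] := A_LDBA; apply: Qd_closed. Qed.

Lemma dsucc_Qd q a : q \in Qd -> dsucc q a \in Qd.
Proof. by move=> q_Qd; apply: delta_Qd q_Qd (dsucc_delta q a). Qed.

Lemma init_notin_Qd : q0 \notin Qd.
Proof. by have [_ [_ [_ [_ init]]]] := A_LDBA. Qed.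

Lemma alpha_Qd q a q' : (q, a, q') \in nba_alpha A -> q \in Qd.
Proof. by move=> acc; have [_ [alpha_sub _]] := A_LDBA; case: (alpha_sub _ _ _ acc). Qed.

(* A profile [(N, l)]: [N] holds the reachable states outside [Qd], [l] those
   inside [Qd], oldest run first. *)
Definition profile := ({set Q} * seq Q)%type.

Definition valid_profile (x : profile) : Prop :=
  [/\ forall q, q \in x.1 -> q \notin Qd, uniq x.2 & forall q, q \in x.2 -> q \in Qd].

Definition adv (l : seq Q) (a : Sigma) : seq Q := [seq dsucc q a | q <- l].

Definition succ_from (N : {set Q}) (a : Sigma) (q' : Q) : bool :=
  [exists q in N, (q, a, q') \in delta].

(* Runs that merge keep the older slot; states newly entering [Qd] are appended. *)
Definition pstep (x : profile) (a : Sigma) : profile :=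
  let l := undup_first (adv x.2 a) in
  ([set q' | succ_from x.1 a q' & q' \notin Qd],
   l ++ [seq q' <- enum Qd | succ_from x.1 a q' && (q' \notin l)]).

Definition merged (l : seq Q) (a : Sigma) (i : nat) : bool :=
  nth q0 (adv l a) i \in take i (adv l a).

Definition slot_color (l : seq Q) (a : Sigma) (i : nat) : nat :=
  if merged l a i then (2 * i).+1
  else if (nth q0 l i, a, dsucc (nth q0 l i) a) \in nba_alpha A then (2 * i).+2
  else (2 * #|Qd|).+1.

Definition pcolor (x : profile) (a : Sigma) : nat :=
  \big[minn/(2 * #|Qd|).+1]_(i < size x.2) slot_color x.2 a i.

Implicit Types (x : profile) (a : Sigma).

Lemma pstep_valid x a : valid_profile x -> valid_profile (pstep x a).
Proof.
case: x => N l [/= _ _ l_Qd]; split => /=.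
- by move=> q; rewrite inE => /andP [].
- rewrite cat_uniq undup_first_uniq filter_uniq ?enum_uniq // andbT /=.
  by apply/hasPn => q; rewrite mem_filter => /andP [/andP []].
- move=> q; rewrite mem_cat mem_filter mem_enum mem_undup_first.
  by case/orP => [/mapP [p p_l ->]|/andP [] //]; apply/dsucc_Qd/l_Qd.
Qed.

Lemma size_valid_profile x : valid_profile x -> size x.2 <= #|Qd|.
Proof.
by case=> _ l_uniq l_Qd; rewrite cardE; apply: uniq_leq_size => // q /l_Qd; rewrite mem_enum.
Qed.

Lemma pstep_prefix x a k :
  exists u, (pstep x a).2 = undup_first (take k (adv x.2 a)) ++ u.
Proof.
by rewrite /pstep /= -{1}(cat_take_drop k (adv x.2 a)) undup_first_cat -catA; eexists.
Qed.

Lemma pstep_enter x a q q' :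
  q \in x.1 -> (q, a, q') \in delta -> q' \in Qd -> q' \in (pstep x a).2.
Proof.
move=> q_N q_a_q' q'_Qd; rewrite mem_cat mem_filter mem_enum q'_Qd andbT.
by case: (q' \in _) => //=; rewrite andbT; apply/existsP; exists q; rewrite q_N.
Qed.

Lemma pstep_slot x a m : m < size x.2 -> uniq (take m.+1 (adv x.2 a)) ->
  m < size (pstep x a).2 /\ nth q0 (pstep x a).2 m = dsucc (nth q0 x.2 m) a.
Proof.
move=> lt_m take_uniq; have [u ->] := pstep_prefix x a m.+1.
have size_take : size (take m.+1 (adv x.2 a)) = m.+1 by rewrite size_takel // size_map.
rewrite undup_first_id // size_cat size_take nth_cat size_take ltnSn nth_take //.
by rewrite (nth_map q0) //; split => //; rewrite ltnS leq_addr.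
Qed.

Lemma pstep_index x a q : q \in x.2 ->
  [/\ dsucc q a \in (pstep x a).2,
      index (dsucc q a) (pstep x a).2 <= index q x.2 &
      (~~ uniq (take (index q x.2).+1 (adv x.2 a)) ->
        index (dsucc q a) (pstep x a).2 < index q x.2)].
Proof.
move=> q_l; set p := index q x.2; set pre := take p.+1 (adv x.2 a).
have lt_p : p < size x.2 by rewrite index_mem.
have size_pre : size pre = p.+1 by rewrite size_takel // size_map.
have q'_pre : dsucc q a \in undup_first pre.
  rewrite mem_undup_first /pre (take_nth q0) ?size_map // mem_rcons.
  by rewrite (nth_map q0) // nth_index // mem_head.
have [u ->] := pstep_prefix x a p.+1; rewrite -/pre.
have lt_index : index (dsucc q a) (undup_first pre ++ u) < size (undup_first pre).
  by rewrite index_cat q'_pre index_mem.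
split; first by rewrite mem_cat q'_pre.
- by rewrite -ltnS -size_pre; apply: leq_trans lt_index (size_undup_first _).
- move=> not_uniq; rewrite -ltnS -size_pre; apply: leq_ltn_trans lt_index _.
  by rewrite ltn_size_undup_first.
Qed.

Lemma pcolor_le x a i : i < size x.2 -> pcolor x a <= slot_color x.2 a i.
Proof. by move=> lt_i; rewrite /pcolor (bigD1 (Ordinal lt_i)) //= geq_minl. Qed.

Lemma pcolor_spec x a : pcolor x a = (2 * #|Qd|).+1 \/
  exists2 i, i < size x.2 & pcolor x a = slot_color x.2 a i.
Proof.
rewrite /pcolor; apply: (big_ind (fun c => c = _ \/ exists2 i, i < size x.2 & c = _)).
- by left.
- by move=> c c' c_spec c'_spec; rewrite /minn; case: ifP.
- by move=> i _; right; exists i.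
Qed.

Lemma pcolor_range x a : 0 < pcolor x a <= (2 * #|Qd|).+1.
Proof.
apply/andP; split.
  have [-> //|[i _ ->]] := pcolor_spec x a.
  by rewrite /slot_color; case: ifP => // _; case: ifP.
rewrite /pcolor; apply: (big_rec (fun c => c <= _)) => // i c _ le_c.
exact: leq_trans (geq_minr _ _) le_c.
Qed.

Lemma pcolor_even x a : ~~ odd (pcolor x a) -> exists m,
  [/\ pcolor x a = (2 * m).+2, m < size x.2 &
      (nth q0 x.2 m, a, dsucc (nth q0 x.2 m) a) \in nba_alpha A].
Proof.
have [->|[i lt_i ->]] := pcolor_spec x a; first by rewrite /= oddM.
rewrite /slot_color; case: ifP => _; first by rewrite /= oddM.
by case: ifP => [acc _|_]; [exists i | rewrite /= oddM].
Qed.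

Lemma pcolor_merged x a i : i < size x.2 -> merged x.2 a i -> pcolor x a <= (2 * i).+1.
Proof.
move=> lt_i merged_i.
by apply: leq_trans (pcolor_le a lt_i) _; rewrite /slot_color merged_i.
Qed.

Lemma pcolor_accepting x a i : i < size x.2 -> ~~ merged x.2 a i ->
  (nth q0 x.2 i, a, dsucc (nth q0 x.2 i) a) \in nba_alpha A -> pcolor x a <= (2 * i).+2.
Proof.
move=> lt_i /negbTE unmerged acc.
by apply: leq_trans (pcolor_le a lt_i) _; rewrite /slot_color unmerged acc.
Qed.

Lemma pcolor_odd x a p : p < #|Qd| ->
  (forall i, i <= p -> i < size x.2 -> ~~ merged x.2 a i) ->
  odd (pcolor x a) -> (2 * p).+3 <= pcolor x a.
Proof.
move=> lt_p unmerged; have [->|[i lt_i ->]] := pcolor_spec x a; first by lia.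
rewrite /slot_color; case: ifP => [merged_i _|_].
  have [le_ip|] := leqP i p; last by lia.
  by rewrite (negbTE (unmerged i le_ip lt_i)) in merged_i.
by case: ifP => _; rewrite /= ?oddM //; lia.
Qed.

(* A profile [(N, l)] is stored as the set [N :|: l] together with a
   permutation of [Qd] having [l] as a prefix: [N] and [l] are recovered as the
   part of the set outside [Qd] and the subsequence of the permutation inside
   the set.  Hence there are at most [2 ^ #|Q| * #|Qd|`!] states. *)
Definition perms := permutations (enum Qd).

Definition state := ({set Q} * seq_sub perms)%type.

Lemma enum_in_perms : enum Qd \in perms.
Proof. by rewrite mem_permutations. Qed.

Definition encode (x : profile) : state :=
  (x.1 :|: [set q in x.2],
   insubd (SeqSub enum_in_perms) (x.2 ++ [seq q <- enum Qd | q \notin x.2])).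

Definition decode (s : state) : profile :=
  ([set q in s.1 | q \notin Qd], [seq q <- ssval s.2 | q \in s.1]).

Lemma decode_valid s : valid_profile (decode s).
Proof.
case: s => X [p p_in] /=; have p_perm : perm_eq p (enum Qd) by rewrite -mem_permutations.
split => /=.
- by move=> q; rewrite inE => /andP [].
- by rewrite filter_uniq // (perm_uniq p_perm) enum_uniq.
- by move=> q; rewrite mem_filter (perm_mem p_perm) mem_enum => /andP [].
Qed.

Lemma decode_encode x : valid_profile x -> decode (encode x) = x.
Proof.
case: x => N l [/= N_Qd l_uniq l_Qd]; rewrite /decode /encode /=.
set p := l ++ _.
have p_perm : p \in perms.
  rewrite mem_permutations; apply: uniq_perm; rewrite ?enum_uniq //.
    rewrite cat_uniq l_uniq filter_uniq ?enum_uniq // andbT /=.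
    by apply/hasPn => q; rewrite mem_filter => /andP [].
  move=> q; rewrite mem_cat mem_filter mem_enum.
  by case q_l: (q \in l) => //=; rewrite l_Qd.
rewrite val_insubd p_perm; congr (_, _).
  apply/setP => q; rewrite !inE; case q_N: (q \in N) => /=; first by rewrite N_Qd.
  by case q_l: (q \in l) => //=; rewrite l_Qd.
rewrite filter_cat (eq_in_filter (a2 := predT)); last by move=> q q_l; rewrite !inE q_l orbT.
rewrite filter_predT (eq_in_filter (a2 := pred0)) ?filter_pred0 ?cats0 //.
move=> q; rewrite mem_filter mem_enum => /andP [q_l q_Qd].
rewrite !inE (negbTE q_l) orbF; apply/negbTE/negP => /N_Qd; by rewrite q_Qd.
Qed.

Definition ldba_dpa : DPA Sigma state :=
  {| dpa_init := encode ([set q0], [::]);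
     dpa_trans := fun s a => encode (pstep (decode s) a);
     dpa_color := fun s a => pcolor (decode s) a |}.

Section OnWord.
Variable w : word Sigma.

Definition profile_at (t : nat) : profile := decode (dpa_run ldba_dpa w t).

Lemma profile_at0 : profile_at 0 = ([set q0], [::]).
Proof.
rewrite /profile_at /= decode_encode //; split => //= q.
by rewrite inE => /eqP ->; apply: init_notin_Qd.
Qed.

Lemma profile_atS t : profile_at t.+1 = pstep (profile_at t) (w t).
Proof. by rewrite /profile_at /= decode_encode //; apply/pstep_valid/decode_valid. Qed.

Lemma color_profile_at t : dpa_color_at ldba_dpa w t = pcolor (profile_at t) (w t).
Proof. by []. Qed.

Definition reachable (t : nat) (q : Q) : Prop := exists r : nat -> Q,
  [/\ r 0 = q0, forall i, i < t -> (r i, w i, r i.+1) \in delta & r t = q].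

Lemma reachableS t p q : reachable t p -> (p, w t, q) \in delta -> reachable t.+1 q.
Proof.
move=> [r [r0 r_run rt]] p_q; exists (fun i => if i == t.+1 then q else r i); split => //.
- move=> i lt_it; rewrite (ltn_eqF lt_it) eqSS.
  by case: eqVneq => [->|ne_it]; [rewrite rt | apply: r_run; rewrite ltn_neqAle ne_it -ltnS].
- by rewrite eqxx.
Qed.

Lemma profile_at_reachable t :
  (forall q, q \in (profile_at t).1 -> reachable t q) /\
  (forall q, q \in (profile_at t).2 -> reachable t q).
Proof.
elim: t => [|t [IH1 IH2]].
  by rewrite profile_at0; split => //= q; rewrite inE => /eqP ->; exists (fun=> q0).
have from_N q : succ_from (profile_at t).1 (w t) q -> reachable t.+1 q.
  by move=> /existsP [p /andP [p_N p_q]]; apply: reachableS (IH1 p p_N) p_q.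
rewrite profile_atS; split => q /=; first by rewrite inE => /andP [/from_N].
rewrite mem_cat mem_undup_first mem_filter.
case/orP => [/mapP [p p_l ->]|/andP [/andP [/from_N //]]].
exact: reachableS (IH2 p p_l) (dsucc_delta _ _).
Qed.

Lemma slot_follows t0 m : m < size (profile_at t0).2 ->
  (forall t, t0 <= t -> m < size (profile_at t).2 ->
     uniq (take m.+1 (adv (profile_at t).2 (w t)))) ->
  forall t, t0 <= t -> m < size (profile_at t).2 /\
    nth q0 (profile_at t.+1).2 m = dsucc (nth q0 (profile_at t).2 m) (w t).
Proof.
move=> lt_m0 uniq_m.
suff lt_m t : t0 <= t -> m < size (profile_at t).2.
  move=> t le_t; split; first exact: lt_m.
  rewrite profile_atS; have lt_mt := lt_m t le_t.
  exact: (pstep_slot lt_mt (uniq_m t le_t lt_mt)).2.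
move=> /subnKC <-; elim: (t - t0) => [|d IHd]; first by rewrite addn0.
by rewrite addnS profile_atS; apply: (pstep_slot IHd (uniq_m _ (leq_addr _ _) IHd)).1.
Qed.

Lemma run_through_slot t0 m : m < size (profile_at t0).2 ->
  (forall t, t0 <= t ->
     nth q0 (profile_at t.+1).2 m = dsucc (nth q0 (profile_at t).2 m) (w t)) ->
  exists r, nba_run A w r /\ forall t, t0 <= t -> r t = nth q0 (profile_at t).2 m.
Proof.
move=> lt_m follows.
have [r0 [r00 r0_run r0_t0]] := (profile_at_reachable t0).2 _ (mem_nth q0 lt_m).
pose r t := if t <= t0 then r0 t else nth q0 (profile_at t).2 m.
have r_slot t : t0 <= t -> r t = nth q0 (profile_at t).2 m.
  rewrite /r leq_eqVlt => /orP [/eqP <-|lt_t]; first by rewrite leqnn.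
  by rewrite leqNgt lt_t.
exists r; split => //; split => [|t]; first by rewrite /r leq0n.
case: (ltnP t t0) => [lt_t|le_t]; first by rewrite /r lt_t ltnW //; apply: r0_run.
by rewrite !r_slot ?(leqW le_t) // follows // dsucc_delta.
Qed.

Lemma dpa_to_nba : dpa_accepts ldba_dpa w -> nba_accepts A w.
Proof.
move=> [c [io_c [least_c even_c]]].
have [T geq_c] : exists T, forall t, T <= t -> c <= pcolor (profile_at t) (w t).
  by apply: eventually_geq => c' lt_c'c /least_c; rewrite leqNgt lt_c'c.
have [t0 [le_Tt0 col_t0]] := io_c T; rewrite color_profile_at in col_t0.
have := even_c; rewrite -col_t0 => /pcolor_even [m [c_m lt_m _]].
rewrite col_t0 in c_m.
have uniq_m t : t0 <= t -> m < size (profile_at t).2 ->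
    uniq (take m.+1 (adv (profile_at t).2 (w t))).
  move=> le_t lt_mt; apply/(uniq_take_nth q0); first by rewrite size_map.
  move=> i le_im; apply/negP => merged_i.
  have := pcolor_merged (leq_trans le_im lt_mt) merged_i.
  have := geq_c t (leq_trans le_Tt0 le_t).
  by rewrite c_m; lia.
have follows := slot_follows lt_m uniq_m.
have [r [r_run r_slot]] := run_through_slot lt_m (fun t le_t => (follows t le_t).2).
exists r; split => // N; have [t [le_t col_t]] := io_c (maxn N t0).
rewrite color_profile_at in col_t; move: le_t; rewrite geq_max => /andP [le_Nt le_t].
exists t; split => //.
have := even_c; rewrite -col_t => /pcolor_even [m' [c_m' _ acc]].
rewrite !r_slot ?(leqW le_t) // (follows t le_t).2.
by have -> : m = m' by lia.
Qed.

Lemma run_in_nondet r : nba_run A w r ->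
  forall t, r t \notin Qd -> r t \in (profile_at t).1.
Proof.
move=> [r0 r_run]; elim=> [|t IHt] rt_Qd; first by rewrite profile_at0 r0 inE.
have rt_nQd : r t \notin Qd by apply: contra rt_Qd => rt; apply: delta_Qd rt (r_run t).
rewrite profile_atS inE rt_Qd andbT /succ_from; apply/existsP; exists (r t).
by rewrite IHt ?r_run.
Qed.

Lemma run_tracked r : nba_run A w r -> (exists k, r k \in Qd) ->
  exists T, forall t, T <= t -> r t \in (profile_at t).2 /\ r t.+1 = dsucc (r t) (w t).
Proof.
move=> r_is_run ex_Qd; have [r0 r_run] := r_is_run.
have [[|k] rk_Qd first_k] := ex_minnP ex_Qd.
  by rewrite r0 (negbTE init_notin_Qd) in rk_Qd.
have rk_nQd : r k \notin Qd by apply/negP => /first_k; rewrite ltnn.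
have in_Qd t : k.+1 <= t -> r t \in Qd.
  move=> /subnKC <-; elim: (t - k.+1) => [|d IHd]; first by rewrite addn0.
  by rewrite addnS; apply: delta_Qd IHd (r_run _).
have next t : k.+1 <= t -> r t.+1 = dsucc (r t) (w t).
  by move=> le_t; apply: dsucc_unique (in_Qd t le_t) (r_run t).
exists k.+1 => t le_t; split; last exact: next.
move: le_t => /subnKC <-; elim: (t - k.+1) => [|d IHd].
  rewrite addn0 profile_atS.
  exact: pstep_enter (run_in_nondet r_is_run rk_nQd) (r_run k) rk_Qd.
by rewrite addnS profile_atS next ?leq_addr //; case: (pstep_index (w (k.+1 + d)) IHd).
Qed.

(* The slot of a tracked run never increases, and decreases whenever some run
   in a lower slot merges, so eventually neither happens. *)
Lemma tracked_run_settles r T :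
  (forall t, T <= t -> r t \in (profile_at t).2 /\ r t.+1 = dsucc (r t) (w t)) ->
  exists T' p, T <= T' /\ forall t, T' <= t ->
    [/\ p < size (profile_at t).2, nth q0 (profile_at t).2 p = r t &
        uniq (take p.+1 (adv (profile_at t).2 (w t)))].
Proof.
move=> tracked; pose pos t := index (r t) (profile_at t).2.
have pos_step t : T <= t -> pos t.+1 <= pos t /\
    (~~ uniq (take (pos t).+1 (adv (profile_at t).2 (w t))) -> pos t.+1 < pos t).
  move=> le_Tt; have [rt_in next] := tracked t le_Tt.
  by rewrite /pos profile_atS next; case: (pstep_index (w t) rt_in).
have [T' [le_TT' const]] := nonincreasing_stabilizes (fun t le_t => (pos_step t le_t).1).
exists T', (pos T'); split => // t le_T't; have le_Tt := leq_trans le_TT' le_T't.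
have rt_in := (tracked t le_Tt).1.
rewrite -(const t le_T't) /pos index_mem nth_index //; split => //.
apply: contraT => not_uniq; have := (pos_step t le_Tt).2 not_uniq.
by rewrite (const t.+1 (leqW le_T't)) (const t le_T't) ltnn.
Qed.

Lemma nba_to_dpa : nba_accepts A w -> dpa_accepts ldba_dpa w.
Proof.
move=> [r [r_run r_acc]].
have ex_Qd : exists k, r k \in Qd by have [i [_ /alpha_Qd]] := r_acc 0; exists i.
have [T tracked] := run_tracked r_run ex_Qd.
have [T' [p [le_TT' settled]]] := tracked_run_settles tracked.
have unmerged t : T' <= t -> forall i, i <= p -> i < size (profile_at t).2 ->
    ~~ merged (profile_at t).2 (w t) i.
  move=> le_t i le_ip _; have [lt_p _ uniq_p] := settled t le_t.
  by apply: (proj1 (uniq_take_nth q0 _) uniq_p); rewrite ?size_map.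
apply: (@least_inf_often_even (dpa_color_at ldba_dpa w) (2 * p).+2).
- move=> N; have [t [le_t acc]] := r_acc (maxn N T').
  move: le_t; rewrite geq_max => /andP [le_Nt le_T't]; exists t; split => //.
  have [lt_p rt _] := settled t le_T't.
  rewrite color_profile_at; apply: pcolor_accepting (unmerged t le_T't p _ lt_p) _ => //.
  by rewrite rt -(tracked t (leq_trans le_TT' le_T't)).2.
- exists T' => t le_t; rewrite color_profile_at => odd_c.
  have [lt_p _ _] := settled t le_t.
  apply: pcolor_odd (unmerged t le_t) odd_c.
  exact: leq_trans lt_p (size_valid_profile (decode_valid _)).
Qed.

End OnWord.

Lemma ldba_dpa_accepts w : dpa_accepts ldba_dpa w <-> nba_accepts A w.
Proof. by split; [apply: dpa_to_nba | apply: nba_to_dpa]. Qed.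

Lemma card_ldba_dpa_state : #|{: state}| = 2 ^ #|Q| * #|Qd|`!.
Proof.
rewrite card_prod -cardsT -powersetT card_powerset cardsT.
by rewrite card_seq_sub ?permutations_uniq // size_permutations ?enum_uniq // -cardE.
Qed.

Lemma ldba_dpa_colors_positive : dpa_colors_positive ldba_dpa.
Proof. by move=> s a; case/andP: (pcolor_range (decode s) a). Qed.

Lemma ldba_dpa_num_colors : dpa_num_colors ldba_dpa <= (2 * #|Qd|).+1.
Proof.
rewrite -[X in _ <= X](size_iota 1); apply: uniq_leq_size; first exact: undup_uniq.
move=> c; rewrite mem_undup => /mapP [[s a] _ ->].
by rewrite mem_iota add1n ltnS; apply: pcolor_range.
Qed.

End LDBAtoDPA.

Lemma fact_leq_ldba_sum n : n`! <= ldba_sum n.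
Proof. by rewrite /ldba_sum big_ord_recr /= subnn fact0 divn1 leq_addl. Qed.

Lemma ldba_sum_leq n : ldba_sum n <= n.+1 * n`!.
Proof.
apply: (@leq_trans (\sum_(i < n.+1) n`!)); first by apply: leq_sum => i _; apply: leq_div.
by rewrite sum_nat_const card_ord.
Qed.

(* Uses only [e >= 2] and [n.+1 <= 2 * n] for [n > 0]. *)
Lemma e_bound_pos n nd : 0 < nd -> e_bound n nd.
Proof.
move=> nd_pos; rewrite /e_bound.
have le_sum : ldba_sum nd <= 2 * nd * nd`!.
  by apply: leq_trans (ldba_sum_leq nd) _; rewrite leq_mul2r; apply/orP; right; lia.
have e_ge2 : Rle 2 (exp 1) by have := exp_ineq1_le 1; lra.
have := le_INR _ _ (elimT leP (leq_mul (leqnn (2 ^ n)) le_sum)).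
rewrite !mult_INR => /Rle_trans; apply.
have := Rmult_le_pos _ _ (Rmult_le_pos _ _ (pos_INR (2 ^ n)) (pos_INR nd)) (pos_INR nd`!).
rewrite [INR 2]/=; nra.
Qed.

Theorem mainTheorem4 (Sigma Q : finType) (A : NBA Sigma Q) (Qd : {set Q}) :
  is_LDBA A Qd ->
  (exists (S : finType) (B : DPA Sigma S),
     dpa_colors_positive B /\
     (forall w : word Sigma, dpa_accepts B w <-> nba_accepts A w) /\
     #|S| <= 2 ^ #|Q| * ldba_sum #|Qd| /\
     dpa_num_colors B <= 2 * #|Qd| + 1) /\
  (0 < #|Qd| -> e_bound #|Q| #|Qd|).
Proof.
move=> A_LDBA; split; last exact: e_bound_pos.
exists (state Qd), (ldba_dpa A Qd); split; [|split; [|split]].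
- exact: ldba_dpa_colors_positive.
- exact: ldba_dpa_accepts.
- by rewrite card_ldba_dpa_state leq_mul2l fact_leq_ldba_sum orbT.
- by rewrite addn1; apply: ldba_dpa_num_colors.
Qed.
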